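(* Let $R,S,R',S'$ be rings whose only idempotents are $0$ and $1$, $M$ an $R$-$S$-bimodule, $N$ an $S$-$R$-bimodule, $M'$ an $R'$-$S'$-bimodule and $N'$ an $S'$-$R'$-bimodule. Let $T=\left[\begin{smallmatrix} R & M\\ N & S\end{smallmatrix}\right]$ and $T'=\left[\begin{smallmatrix} R' & M'\\ N' & S'\end{smallmatrix}\right]$ be the associated Morita context rings with both Morita maps equal to zero. Then $\mathrm{Iso}_0(T,T')=\mathrm{Iso}(T,T')$, i.e. every ring isomorphism $T\to T'$ lies in $\mathrm{Iso}_0^0(T,T')\cup\mathrm{Iso}_0^1(T,T')$.
   Context: All rings have an identity $1\neq 0$. With zero Morita maps, $T$ is the set of formal matrices $\left[\begin{smallmatrix} r & m\\ n & s\end{smallmatrix}\right]$ ($r\in R,m\in M,n\in N,s\in S$) with entrywise addition and product $\left[\begin{smallmatrix} r & m\\ n & s\end{smallmatrix}\right]\left[\begin{smallmatrix} r' & m'\\ n' & s'\end{smallmatrix}\right]=\left[\begin{smallmatrix} rr' & rm'+ms'\\ nr'+sn' & ss'\end{smallmatrix}\right]$; similarly for $T'$. $\mathrm{Iso}(T,T')$ is the set of all ring isomorphisms $T\to T'$. $\mathrm{Iso}_0^0(T,T')$ is the set of maps $\phi\left(\left[\begin{smallmatrix} r & m\\ n & s\end{smallmatrix}\right]\right)=\left[\begin{smallmatrix}\gamma(r) & \gamma(r)m'_0-m'_0\delta(s)+u(m)\\ n'_0\gamma(r)-\delta(s)n'_0+v(n) & \delta(s)\end{smallmatrix}\right]$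 where $\gamma:R\to R'$, $\delta:S\to S'$ are ring isomorphisms, $u:M\to M'$ and $v:N\to N'$ are additive bijections with $u(rms)=\gamma(r)u(m)\delta(s)$ and $v(snr)=\delta(s)v(n)\gamma(r)$, and $m'_0\in M'$, $n'_0\in N'$ are arbitrary (the remaining defining conditions are automatic when all Morita maps are zero). $\mathrm{Iso}_0^1(T,T')$ is the set of maps $\psi\left(\left[\begin{smallmatrix} r & m\\ n & s\end{smallmatrix}\right]\right)=\left[\begin{smallmatrix}\sigma(s) & m'_*\rho(r)-\sigma(s)m'_*+\nu(n)\\ \rho(r)n'_*-n'_*\sigma(s)+\mu(m) & \rho(r)\end{smallmatrix}\right]$ where $\rho:R\to S'$, $\sigma:S\to R'$ are ring isomorphisms, $\mu:M\to N'$, $\nu:N\to M'$ are additive bijections with $\mu(rms)=\rho(r)\mu(m)\sigma(s)$ and $\nu(snr)=\sigma(s)\nu(n)\rho(r)$, and $m'_*\in M'$, $n'_*\in N'$ are arbitrary. $\mathrm{Iso}_0(T,T')=\mathrm{Iso}_0^0(T,T')\cup\mathrm{Iso}_0^1(T,T')$. *)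

From HB Require Import structures.
From mathcomp Require Import all_boot all_order all_algebra.
Set Implicit Arguments. Unset Strict Implicit. Unset Printing Implicit Defensive.
Import GRing.Theory.
Local Open Scope ring_scope.

Record bimod (R S : nzRingType) := Bimod {
  bm_car :> zmodType;
  lact : R -> bm_car -> bm_car;
  ract : bm_car -> S -> bm_car;
  lactDl : forall r r' m, lact (r + r') m = lact r m + lact r' m;
  lactDr : forall r m m', lact r (m + m') = lact r m + lact r m';
  lactA : forall r r' m, lact (r * r') m = lact r (lact r' m);
  lact1 : forall m, lact 1 m = m;
  ractDl : forall m m' s, ract (m + m') s = ract m s + ract m' s;
  ractDr : forall m s s', ract m (s + s') = ract m s + ract m s';
  ractA : forall m s s', ract m (s * s') = ract (ract m s) s';
  ract1 : forall m, ract m 1 = m;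
  lractA : forall r m s, ract (lact r m) s = lact r (ract m s)
}.

Definition only_trivial_idempotents (R : nzRingType) : Prop :=
  forall e : R, e * e = e -> e = 0 \/ e = 1.

(* Elements of the Morita context ring T = [R M; N S] (zero Morita maps). *)
Record mctx (R S : nzRingType) (M : bimod R S) (N : bimod S R) := MC {
  e11 : R; e12 : M; e21 : N; e22 : S }.

Section MoritaOps.
Variables (R S : nzRingType) (M : bimod R S) (N : bimod S R).

Definition mc_add (x y : mctx M N) : mctx M N :=
  MC (e11 x + e11 y) (e12 x + e12 y) (e21 x + e21 y) (e22 x + e22 y).

(* [r m; n s][r' m'; n' s'] = [rr', rm' + ms'; nr' + sn', ss'] *)
Definition mc_mul (x y : mctx M N) : mctx M N :=
  MC (e11 x * e11 y)
     (lact (e11 x) (e12 y) + ract (e12 x) (e22 y))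
     (ract (e21 x) (e11 y) + lact (e22 x) (e21 y))
     (e22 x * e22 y).

Definition mc_one : mctx M N := MC 1 0 0 1.
End MoritaOps.

Definition ring_iso (A B : nzRingType) (f : A -> B) : Prop :=
  bijective f /\ (forall a b, f (a + b) = f a + f b) /\
  (forall a b, f (a * b) = f a * f b) /\ f 1 = 1.

Definition mc_ring_iso (R S R' S' : nzRingType)
  (M : bimod R S) (N : bimod S R) (M' : bimod R' S') (N' : bimod S' R')
  (f : mctx M N -> mctx M' N') : Prop :=
  bijective f /\ (forall x y, f (mc_add x y) = mc_add (f x) (f y)) /\
  (forall x y, f (mc_mul x y) = mc_mul (f x) (f y)) /\
  f (mc_one M N) = mc_one M' N'.

Definition Iso00 (R S R' S' : nzRingType)
  (M : bimod R S) (N : bimod S R) (M' : bimod R' S') (N' : bimod S' R')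
  (phi : mctx M N -> mctx M' N') : Prop :=
  exists (gamma : R -> R') (delta : S -> S') (u : M -> M') (v : N -> N')
         (m0 : M') (n0 : N'),
    ring_iso gamma /\ ring_iso delta /\
        bijective u /\ (forall m m', u (m + m') = u m + u m') /\
        bijective v /\ (forall n n', v (n + n') = v n + v n') /\
        (forall r m s, u (ract (lact r m) s) = ract (lact (gamma r) (u m)) (delta s)) /\
        (forall s n r, v (ract (lact s n) r) = ract (lact (delta s) (v n)) (gamma r)) /\
        (forall x : mctx M N,
          phi x = MC (gamma (e11 x))
                     (lact (gamma (e11 x)) m0 - ract m0 (delta (e22 x)) + u (e12 x))
                     (ract n0 (gamma (e11 x)) - lact (delta (e22 x)) n0 + v (e21 x))
                     (delta (e22 x))).

Definition Iso01 (R S R' S' : nzRingType)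
  (M : bimod R S) (N : bimod S R) (M' : bimod R' S') (N' : bimod S' R')
  (psi : mctx M N -> mctx M' N') : Prop :=
  exists (rho : R -> S') (sigma : S -> R') (mu : M -> N') (nu : N -> M')
         (ms : M') (ns : N'),
    ring_iso rho /\ ring_iso sigma /\
        bijective mu /\ (forall m m', mu (m + m') = mu m + mu m') /\
        bijective nu /\ (forall n n', nu (n + n') = nu n + nu n') /\
        (forall r m s, mu (ract (lact r m) s) = ract (lact (rho r) (mu m)) (sigma s)) /\
        (forall s n r, nu (ract (lact s n) r) = ract (lact (sigma s) (nu n)) (rho r)) /\
        (forall x : mctx M N,
          psi x = MC (sigma (e22 x))
                     (ract ms (rho (e11 x)) - lact (sigma (e22 x)) ms + nu (e21 x))
                     (lact (rho (e11 x)) ns - ract ns (sigma (e22 x)) + mu (e12 x))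
                     (rho (e11 x))).

(* Write E11 = [1 0; 0 0] and E22 = [0 0; 0 1] in T = [R M; N S].  A map
   T -> T' is of "standard form" if it is given by the formula defining
   Iso_0^0(T,T') for some maps gam, del, u, v and base points m0, n0.  We show:
   - a map of standard form is a ring isomorphism iff its data gam, del, u, v
     satisfy the conditions of Iso_0^0 (mc_std_ring_iso, mc_std_components);
   - a ring homomorphism sending E11 to [1 a; b 0] is of standard form with
     base points a, b: this is the Peirce decomposition of T relative to E11
     and E22, transported by the homomorphism (mc_hom_std);
   - transposing the corners, [R M; N S] ~ [S N; M R], turns Iso_0^1 into
     Iso_0^0 (Iso01_swap) and preserves ring isomorphisms;
   - since R' and S' have only trivial idempotents, a ring isomorphism sends
     the idempotent E11 to [1 a; b 0] or to [0 a; b 1] (image_E11).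
   In the first case the isomorphism lies in Iso_0^0, in the second its
   transpose does, so it lies in Iso_0^1; the converse inclusion is the first
   point. *)
From HB Require Import structures.
From mathcomp Require Import all_boot all_order all_algebra.
Set Implicit Arguments. Unset Strict Implicit. Unset Printing Implicit Defensive.
Import GRing.Theory.
Local Open Scope ring_scope.

Lemma additive_fun0 (U V : zmodType) (f : U -> V) :
  (forall x y, f (x + y) = f x + f y) -> f 0 = 0.
Proof. by move=> fD; apply: (@addrI _ (f 0)); rewrite -fD !addr0. Qed.

Lemma double_eq_self (V : zmodType) (x : V) : x = x + x -> x = 0.
Proof. by move=> H; apply: (@addrI _ x); rewrite addr0 -H. Qed.

Lemma addr_sub_add3 (V : zmodType) (a b c a' b' c' : V) :
  (a - b + c) + (a' - b' + c') = (a + a') - (b + b') + (c + c').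
Proof. by rewrite opprD [LHS]addrACA [X in X + _ = _]addrACA. Qed.

Lemma addr_sub_telescope (V : zmodType) (a x b c d : V) :
  a - c + (b + d) = (a - x + b) + (x - c + d).
Proof. by rewrite [RHS]addrACA (addrA (a - x) x) subrK. Qed.

Section BimoduleTheory.
Variables (R S : nzRingType) (M : bimod R S).

Lemma lact0l (m : M) : lact 0 m = 0.
Proof. by apply: double_eq_self; rewrite -lactDl addr0. Qed.
Lemma lact0r (r : R) : lact r (0 : M) = 0.
Proof. by apply: double_eq_self; rewrite -lactDr addr0. Qed.
Lemma ract0l (s : S) : ract (0 : M) s = 0.
Proof. by apply: double_eq_self; rewrite -ractDl addr0. Qed.
Lemma ract0r (m : M) : ract m 0 = 0.
Proof. by apply: double_eq_self; rewrite -ractDr addr0. Qed.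

Lemma lactNr (r : R) (m : M) : lact r (- m) = - lact r m.
Proof. by apply: (@addrI _ (lact r m)); rewrite -lactDr !subrr lact0r. Qed.
Lemma ractNl (s : S) (m : M) : ract (- m) s = - ract m s.
Proof. by apply: (@addrI _ (ract m s)); rewrite -ractDl !subrr ract0l. Qed.
End BimoduleTheory.

Definition simpl01 := (mul1r, mulr1, mul0r, mulr0, lact1, ract1, lact0l,
  lact0r, ract0l, ract0r, addr0, add0r, subr0, sub0r, oppr0).

Section StandardForm.
Variables (R S R' S' : nzRingType) (M : bimod R S) (N : bimod S R)
  (M' : bimod R' S') (N' : bimod S' R').

Lemma mc_ring_iso_eq (f h : mctx M N -> mctx M' N') :
  mc_ring_iso f -> f =1 h -> mc_ring_iso h.
Proof.
move=> [fB [fD [fM f1]]] E; split; first exact: (eq_bij fB E).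
by split; [move=> x y | split; [move=> x y|]]; rewrite -!E.
Qed.

Definition mc_std (gam : R -> R') (del : S -> S') (u : M -> M') (v : N -> N')
    (m0 : M') (n0 : N') (x : mctx M N) : mctx M' N' :=
  MC (gam (e11 x))
     (lact (gam (e11 x)) m0 - ract m0 (del (e22 x)) + u (e12 x))
     (ract n0 (gam (e11 x)) - lact (del (e22 x)) n0 + v (e21 x))
     (del (e22 x)).

Definition std_components (gam : R -> R') (del : S -> S') (u : M -> M')
    (v : N -> N') : Prop :=
  ring_iso gam /\ ring_iso del /\
  bijective u /\ (forall m m', u (m + m') = u m + u m') /\
  bijective v /\ (forall n n', v (n + n') = v n + v n') /\
  (forall r m s, u (ract (lact r m) s) = ract (lact (gam r) (u m)) (del s)) /\
  (forall s n r, v (ract (lact s n) r) = ract (lact (del s) (v n)) (gam r)).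

Lemma Iso00E (phi : mctx M N -> mctx M' N') :
  Iso00 phi <-> exists gam del u v m0 n0,
    std_components gam del u v /\ phi =1 mc_std gam del u v m0 n0.
Proof.
split=> [[gam [del [u [v [m0 [n0 H]]]]]] | [gam [del [u [v [m0 [n0 H]]]]]]].
  by exists gam, del, u, v, m0, n0; rewrite /std_components /mc_std; tauto.
by exists gam, del, u, v, m0, n0; move: H; rewrite /std_components /mc_std; tauto.
Qed.

Variables (gam : R -> R') (del : S -> S') (u : M -> M') (v : N -> N')
  (m0 : M') (n0 : N').
Local Notation std := (mc_std gam del u v m0 n0).

(* Admissible data give a ring isomorphism: its inverse is again of the same
   shape, built from the inverses of the components. *)
Lemma mc_std_ring_iso : std_components gam del u v -> mc_ring_iso std.
Proof.
move=> [[gB [gD [gM g1]]] [[dB [dD [dM d1]]] [uB [uD [vB [vD [uC vC]]]]]]].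
have [u0 v0] := (additive_fun0 uD, additive_fun0 vD).
have uL r m : u (lact r m) = lact (gam r) (u m).
  by have := uC r m 1; rewrite d1 !ract1.
have uR m s : u (ract m s) = ract (u m) (del s).
  by have := uC 1 m s; rewrite g1 !lact1.
have vL s n : v (lact s n) = lact (del s) (v n).
  by have := vC s n 1; rewrite g1 !ract1.
have vR n r : v (ract n r) = ract (v n) (gam r).
  by have := vC 1 n r; rewrite d1 !lact1.
case: gB => gi gK giK; case: dB => di dK diK.
case: uB => ui uK uiK; case: vB => vi vK viK.
split.
  pose h (y : mctx M' N') : mctx M N := MC (gi (e11 y))
    (ui (e12 y - (lact (e11 y) m0 - ract m0 (e22 y))))
    (vi (e21 y - (ract n0 (e11 y) - lact (e22 y) n0))) (di (e22 y)).
  exists h; case=> r m n s; rewrite /h /mc_std /=.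
    by rewrite gK dK addrC addKr uK addrC addKr vK.
  by rewrite giK diK uiK viK !subrKC.
split.
  move=> [r m n s] [r' m' n' s']; rewrite /mc_std /mc_add /=.
  by rewrite gD dD uD vD lactDl ractDr ractDr lactDl !addr_sub_add3.
split.
  move=> [r m n s] [r' m' n' s']; rewrite /mc_std /mc_mul /=.
  rewrite gM dM lactA ractA ractA lactA uD vD uL uR vL vR.
  rewrite !lactDr !lactNr !ractDl !ractNl !lractA.
  by rewrite (addr_sub_telescope _ (lact (gam r) (ract m0 (del s'))))
    (addr_sub_telescope _ (lact (del s) (ract n0 (gam r')))).
by rewrite /mc_std /= g1 d1 u0 v0 !simpl01 !subrr.
Qed.


(* The components of a bijective map of standard form are bijective: std of
   an element with a single nonzero entry depends only on the image of that
   entry under the corresponding component, and a right inverse of each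
   component is read off from the inverse h of std. *)
Lemma mc_std_bijective_components : bijective std ->
  [/\ bijective gam, bijective del, bijective u & bijective v].
Proof.
move=> [h hK Kh].
split.
- pose gi p := e11 (h (MC p 0 0 0)).
  have giK : cancel gi gam := fun p => congr1 (@e11 _ _ _ _) (Kh (MC p 0 0 0)).
  apply: Bijective (inj_can_sym giK _) giK => r r' E.
  have : std (MC r 0 0 0) = std (MC r' 0 0 0) by rewrite /mc_std /= E.
  by move/(congr1 h); rewrite !hK => -[].
- pose di p := e22 (h (MC 0 0 0 p)).
  have diK : cancel di del := fun p => congr1 (@e22 _ _ _ _) (Kh (MC 0 0 0 p)).
  apply: Bijective (inj_can_sym diK _) diK => s s' E.
  have : std (MC 0 0 0 s) = std (MC 0 0 0 s') by rewrite /mc_std /= E.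
  by move/(congr1 h); rewrite !hK => -[].
- pose ui p := e12 (h (MC 0 p 0 0)).
  have uiK : cancel ui u.
    move=> p; have := Kh (MC 0 p 0 0); rewrite /ui; case: (h _) => r m n s.
    rewrite /mc_std /= => -[g0r E12 _ d0s]; by rewrite -E12 g0r d0s !simpl01.
  apply: Bijective (inj_can_sym uiK _) uiK => m m' E.
  have : std (MC 0 m 0 0) = std (MC 0 m' 0 0) by rewrite /mc_std /= E.
  by move/(congr1 h); rewrite !hK => -[].
- pose vi p := e21 (h (MC 0 0 p 0)).
  have viK : cancel vi v.
    move=> p; have := Kh (MC 0 0 p 0); rewrite /vi; case: (h _) => r m n s.
    rewrite /mc_std /= => -[g0r _ E21 d0s]; by rewrite -E21 g0r d0s !simpl01.
  apply: Bijective (inj_can_sym viK _) viK => n n' E.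
  have : std (MC 0 0 n 0) = std (MC 0 0 n' 0) by rewrite /mc_std /= E.
  by move/(congr1 h); rewrite !hK => -[].
Qed.

(* Conversely, if a map of standard form is a ring isomorphism, its data are
   admissible: each component is read off from the image of a single entry. *)
Lemma mc_std_components : mc_ring_iso std -> std_components gam del u v.
Proof.
move=> [/mc_std_bijective_components [gB dB uB vB] [sD [sM s1]]].
have gD r r' : gam (r + r') = gam r + gam r'
  := congr1 (@e11 _ _ _ _) (sD (MC r 0 0 0) (MC r' 0 0 0)).
have dD s s' : del (s + s') = del s + del s'
  := congr1 (@e22 _ _ _ _) (sD (MC 0 0 0 s) (MC 0 0 0 s')).
have [g0 d0] := (additive_fun0 gD, additive_fun0 dD).
have uD m m' : u (m + m') = u m + u m'.
  by have := congr1 (@e12 _ _ _ _) (sD (MC 0 m 0 0) (MC 0 m' 0 0));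
    rewrite /= !addr0 g0 d0 !simpl01.
have vD n n' : v (n + n') = v n + v n'.
  by have := congr1 (@e21 _ _ _ _) (sD (MC 0 0 n 0) (MC 0 0 n' 0));
    rewrite /= !addr0 g0 d0 !simpl01.
have [u0 v0] := (additive_fun0 uD, additive_fun0 vD).
have gM r r' : gam (r * r') = gam r * gam r'
  := congr1 (@e11 _ _ _ _) (sM (MC r 0 0 0) (MC r' 0 0 0)).
have dM s s' : del (s * s') = del s * del s'
  := congr1 (@e22 _ _ _ _) (sM (MC 0 0 0 s) (MC 0 0 0 s')).
have g1 : gam 1 = 1 := congr1 (@e11 _ _ _ _) s1.
have d1 : del 1 = 1 := congr1 (@e22 _ _ _ _) s1.
(* Semilinearity: compare the off-diagonal entries of the images of the
   products [r 0; 0 0][0 m; 0 0][0 0; 0 s] and [0 0; 0 s][0 0; n 0][r 0; 0 0]. *)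
have sM3 x y z :
    std (mc_mul (mc_mul x y) z) = mc_mul (mc_mul (std x) (std y)) (std z).
  by rewrite !sM.
have uC r m s : u (ract (lact r m) s) = ract (lact (gam r) (u m)) (del s).
  have := congr1 (@e12 _ _ _ _) (sM3 (MC r 0 0 0) (MC 0 m 0 0) (MC 0 0 0 s)).
  by rewrite /mc_std /mc_mul /= !simpl01 g0 d0 u0 !simpl01.
have vC s n r : v (ract (lact s n) r) = ract (lact (del s) (v n)) (gam r).
  have := congr1 (@e21 _ _ _ _) (sM3 (MC 0 0 0 s) (MC 0 0 n 0) (MC r 0 0 0)).
  by rewrite /mc_std /mc_mul /= !simpl01 g0 d0 v0 !simpl01.
by do !split.
Qed.
End StandardForm.

Section CornerProducts.
Variables (R S : nzRingType) (M : bimod R S) (N : bimod S R).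
Implicit Types (a : M) (b : N) (y : mctx M N).

(* Products e y e' with idempotents e = [1 a; b 0] or [0 a; b 1] (Peirce
   decomposition): the 11 and 22 corners, and the two mixed corners. *)
Lemma corner11 a b y : mc_mul (mc_mul (MC 1 a b 0) y) (MC 1 a b 0) =
  MC (e11 y) (lact (e11 y) a) (ract b (e11 y)) 0.
Proof. by case: y => p q t w; rewrite /mc_mul /= !simpl01. Qed.

Lemma corner22 a b y : mc_mul (mc_mul (MC 0 a b 1) y) (MC 0 a b 1) =
  MC 0 (ract a (e22 y)) (lact (e22 y) b) (e22 y).
Proof. by case: y => p q t w; rewrite /mc_mul /= !simpl01. Qed.

Lemma corner12 a b a' b' y :
  let z := mc_mul (mc_mul (MC 1 a b 0) y) (MC 0 a' b' 1) in
  z = MC 0 (e12 z) 0 0.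
Proof. by case: y => p q t w; rewrite /mc_mul /= !simpl01. Qed.

Lemma corner21 a b a' b' y :
  let z := mc_mul (mc_mul (MC 0 a b 1) y) (MC 1 a' b' 0) in
  z = MC 0 0 (e21 z) 0.
Proof. by case: y => p q t w; rewrite /mc_mul /= !simpl01. Qed.
End CornerProducts.

Section StandardShape.
Variables (R S R' S' : nzRingType) (M : bimod R S) (N : bimod S R)
  (M' : bimod R' S') (N' : bimod S' R').
Variables (f : mctx M N -> mctx M' N') (a : M') (b : N').
Hypotheses (fD : forall x y, f (mc_add x y) = mc_add (f x) (f y))
  (fM : forall x y, f (mc_mul x y) = mc_mul (f x) (f y))
  (f1 : f (mc_one M N) = mc_one M' N')
  (fE11 : f (MC 1 0 0 0) = MC 1 a b 0).

(* The complementary idempotent E22 = 1 - E11 goes to 1 - f E11. *)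
Lemma image_E22 : f (MC 0 0 0 1) = MC 0 (- a) (- b) 1.
Proof.
have := fD (MC 1 0 0 0) (MC 0 0 0 1); rewrite /mc_add /= !simpl01.
rewrite -[MC 1 0 0 1]/(mc_one M N) f1 fE11.
case: (f _) => c0 c1 c2 c3; rewrite /mc_one /= => -[h0 h1 h2 h3].
congr MC; last by rewrite h3 add0r.
- by apply: (@addrI _ 1); rewrite -h0 addr0.
- by rewrite -[c1](addKr a) -h1 addr0.
- by rewrite -[c2](addKr b) -h2 addr0.
Qed.

(* Each single-entry element is a corner product with E11 and E22, so its
   image is the corresponding corner product with f E11 and f E22. *)
Lemma image_diag11 r :
  f (MC r 0 0 0) = MC (e11 (f (MC r 0 0 0)))
    (lact (e11 (f (MC r 0 0 0))) a) (ract b (e11 (f (MC r 0 0 0)))) 0.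
Proof.
rewrite -corner11 -fE11 -!fM; congr f.
by rewrite /mc_mul /= !simpl01.
Qed.

Lemma image_diag22 s :
  f (MC 0 0 0 s) = MC 0 (ract (- a) (e22 (f (MC 0 0 0 s))))
    (lact (e22 (f (MC 0 0 0 s))) (- b)) (e22 (f (MC 0 0 0 s))).
Proof.
rewrite -corner22 -image_E22 -!fM; congr f.
by rewrite /mc_mul /= !simpl01.
Qed.

Lemma image_offdiag12 m : f (MC 0 m 0 0) = MC 0 (e12 (f (MC 0 m 0 0))) 0 0.
Proof.
have E : (MC 0 m 0 0 : mctx M N) = mc_mul (mc_mul (MC 1 0 0 0) (MC 0 m 0 0)) (MC 0 0 0 1).
  by rewrite /mc_mul /= !simpl01.
by rewrite [in LHS]E !fM fE11 image_E22 [LHS]corner12 -fE11 -image_E22 -!fM -E.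
Qed.

Lemma image_offdiag21 n : f (MC 0 0 n 0) = MC 0 0 (e21 (f (MC 0 0 n 0))) 0.
Proof.
have E : (MC 0 0 n 0 : mctx M N) = mc_mul (mc_mul (MC 0 0 0 1) (MC 0 0 n 0)) (MC 1 0 0 0).
  by rewrite /mc_mul /= !simpl01.
by rewrite [in LHS]E !fM fE11 image_E22 [LHS]corner21 -fE11 -image_E22 -!fM -E.
Qed.

(* Summing the four pieces: a ring homomorphism sending E11 to [1 a; b 0]
   is of standard form with base points a and b. *)
Lemma mc_hom_std : f =1 mc_std (fun r => e11 (f (MC r 0 0 0)))
  (fun s => e22 (f (MC 0 0 0 s))) (fun m => e12 (f (MC 0 m 0 0)))
  (fun n => e21 (f (MC 0 0 n 0))) a b.
Proof.
case=> r m n s.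
have -> : (MC r m n s : mctx M N) = mc_add (mc_add (MC r 0 0 0) (MC 0 0 0 s))
  (mc_add (MC 0 m 0 0) (MC 0 0 n 0)) by rewrite /mc_add /= !simpl01.
rewrite !fD image_diag11 image_diag22 image_offdiag12 image_offdiag21.
by rewrite /mc_add /mc_std /= ractNl lactNr !simpl01.
Qed.
End StandardShape.

Section Transpose.
Variables (R S : nzRingType) (M : bimod R S) (N : bimod S R).

Definition mc_swap (x : mctx M N) : mctx N M :=
  MC (e22 x) (e21 x) (e12 x) (e11 x).

Lemma mc_swap_add (x y : mctx M N) :
  mc_swap (mc_add x y) = mc_add (mc_swap x) (mc_swap y).
Proof. by []. Qed.

Lemma mc_swap_mul (x y : mctx M N) :
  mc_swap (mc_mul x y) = mc_mul (mc_swap x) (mc_swap y).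
Proof. by rewrite /mc_swap /mc_mul /= [_ + lact _ _]addrC [lact _ _ + _]addrC. Qed.
End Transpose.
Arguments mc_swap {R S M N} x.

Lemma mc_swapK (R S : nzRingType) (M : bimod R S) (N : bimod S R)
  (x : mctx M N) : mc_swap (mc_swap x) = x.
Proof. by case: x. Qed.

Section Swap.
Variables (R S R' S' : nzRingType) (M : bimod R S) (N : bimod S R)
  (M' : bimod R' S') (N' : bimod S' R').

Lemma mc_ring_iso_swap (f : mctx M N -> mctx M' N') :
  mc_ring_iso f -> mc_ring_iso (mc_swap \o f).
Proof.
move=> [fB [fD [fM f1]]].
have swapB : bijective (@mc_swap _ _ M' N')
  := Bijective (@mc_swapK _ _ _ _) (@mc_swapK _ _ _ _).
split; first exact: bij_comp swapB fB.
split=> [x y | ]; first by rewrite /= fD mc_swap_add.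
by split=> [x y | ]; rewrite /= ?fM ?mc_swap_mul // f1.
Qed.

(* Iso_0^1 consists of the transposes of the maps in Iso_0^0 with target
   [S' N'; M' R']: the defining data coincide, with the base points exchanged. *)
Lemma Iso01_swap (psi : mctx M N -> mctx M' N') :
  Iso01 psi <-> Iso00 (mc_swap \o psi).
Proof.
split=> [[rho [sig [mu [nu [ms [ns H]]]]]] | [rho [sig [mu [nu [ns [ms H]]]]]]].
  have F x : mc_swap (psi x) = MC (rho (e11 x))
      (lact (rho (e11 x)) ns - ract ns (sig (e22 x)) + mu (e12 x))
      (ract ms (rho (e11 x)) - lact (sig (e22 x)) ms + nu (e21 x)) (sig (e22 x)).
    by move: H => [_ [_ [_ [_ [_ [_ [_ [_ ->]]]]]]]].
  by exists rho, sig, mu, nu, ns, ms; move: H F; rewrite /comp; tauto.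
have F x : psi x = MC (sig (e22 x))
    (ract ms (rho (e11 x)) - lact (sig (e22 x)) ms + nu (e21 x))
    (lact (rho (e11 x)) ns - ract ns (sig (e22 x)) + mu (e12 x)) (rho (e11 x)).
  by move: H => [_ [_ [_ [_ [_ [_ [_ [_ /(_ x) /= E]]]]]]]]; rewrite -[psi x]mc_swapK E.
by exists rho, sig, mu, nu, ms, ns; move: H F; tauto.
Qed.
End Swap.

Section Classification.
Variables (R S R' S' : nzRingType) (M : bimod R S) (N : bimod S R)
  (M' : bimod R' S') (N' : bimod S' R').

Lemma Iso00_ring_iso (phi : mctx M N -> mctx M' N') :
  Iso00 phi -> mc_ring_iso phi.
Proof.
move=> /Iso00E [gam [del [u [v [m0 [n0 [comp E]]]]]]].
by apply: mc_ring_iso_eq (mc_std_ring_iso m0 n0 comp) _ => x; rewrite E.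
Qed.

Lemma Iso00_of_E11 (f : mctx M N -> mctx M' N') (a : M') (b : N') :
  mc_ring_iso f -> f (MC 1 0 0 0) = MC 1 a b 0 -> Iso00 f.
Proof.
move=> fI fE11; have [_ [fD [fM f1]]] := fI.
have fE := mc_hom_std fD fM f1 fE11.
apply/Iso00E; do 6 eexists; split; last exact: fE.
exact/mc_std_components/(mc_ring_iso_eq fI).
Qed.

(* The image of the idempotent E11 is an idempotent [c a; b d] with c, d
   idempotent; when R' and S' have no nontrivial idempotents, injectivity
   rules out c = d, leaving the two corners [1 a; b 0] and [0 a; b 1]. *)
Lemma image_E11 (f : mctx M N -> mctx M' N') :
  only_trivial_idempotents R' -> only_trivial_idempotents S' ->
  mc_ring_iso f ->
  (exists a b, f (MC 1 0 0 0) = MC 1 a b 0) \/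
  (exists a b, f (MC 1 0 0 0) = MC 0 a b 1).
Proof.
move=> hR' hS' [[g fK _] [fD [fM f1]]].
have f0 : f (MC 0 0 0 0) = MC 0 0 0 0.
  have := fD (MC 0 0 0 0) (MC 0 0 0 0); rewrite /mc_add /= !addr0.
  case: (f _) => c a b d /= -[/double_eq_self-> /double_eq_self->].
  by move=> /double_eq_self-> /double_eq_self->.
have := fM (MC 1 0 0 0) (MC 1 0 0 0); rewrite /mc_mul /= !simpl01.
case E: (f _) => [c a b d]; rewrite /mc_mul /= => -[hc ha hb hd].
have [c0|c1] := hR' c (esym hc); have [d0|d1] := hS' d (esym hd).
- rewrite c0 d0 !simpl01 in ha hb; rewrite c0 d0 ha hb -f0 in E.
  by move/(can_inj fK): E => [] /eqP; rewrite oner_eq0.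
- by right; exists a, b; rewrite -c0 -d1.
- by left; exists a, b; rewrite -c1 -d0.
- rewrite c1 d1 !simpl01 in ha hb.
  rewrite c1 d1 (double_eq_self ha) (double_eq_self hb) in E.
  move: E; rewrite -[MC 1 0 0 1]/(mc_one M' N') -f1 => /(can_inj fK) [] /eqP.
  by rewrite eq_sym oner_eq0.
Qed.
End Classification.

Theorem theorem4p7 (R S R' S' : nzRingType)
  (M : bimod R S) (N : bimod S R) (M' : bimod R' S') (N' : bimod S' R')
  (hR : only_trivial_idempotents R) (hS : only_trivial_idempotents S)
  (hR' : only_trivial_idempotents R') (hS' : only_trivial_idempotents S')
  (phi : mctx M N -> mctx M' N') :
  mc_ring_iso phi <-> (Iso00 phi \/ Iso01 phi).
Proof.
split=> [phiI | [/Iso00_ring_iso // | /Iso01_swap /Iso00_ring_iso swapI]].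
- have [[a [b E]] | [a [b E]]] := image_E11 hR' hS' phiI.
    by left; exact: Iso00_of_E11 phiI E.
  right; apply/Iso01_swap.
  by apply: (Iso00_of_E11 (mc_ring_iso_swap phiI)); rewrite /= E.
- have phiE : (mc_swap \o (mc_swap \o phi)) =1 phi by move=> x; exact: mc_swapK.
  exact: mc_ring_iso_eq (mc_ring_iso_swap swapI) phiE.
Qed.
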